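(* Let $n\geq 2$, $\Lambda=U^{\oplus 3}\oplus E_8(-1)^{\oplus 2}\oplus\mathbb{Z}\ell$ with $(\ell,\ell)=-2(n-1)$, let $\gamma$ be a positive divisor of $2(n-1)$, $a$ an integer coprime to $\gamma$, and $t$ an integer with $d:=\gamma^2t-(n-1)a^2>0$; set $h=\gamma(e+tf)-a\ell$. Then restriction $O(\Lambda,h)\to O(\Lambda_h)$ induces an isomorphism $\widetilde{O}(\Lambda,h)\cong\widetilde{O}(\Lambda_h)$.
   Context: $e,f$ is the standard basis of the first copy of $U$. $\Lambda_h=h^\perp\subset\Lambda$. For an even lattice $L$, $D(L)=L^\vee/L$ is its discriminant group and $\widetilde{O}(L)$ is the group of isometries of $L$ inducing the identity on $D(L)$. $O(\Lambda,h)$ is the stabilizer of $h$ in $O(\Lambda)$ and $\widetilde{O}(\Lambda,h)=\widetilde{O}(\Lambda)\cap O(\Lambda,h)$. Here $h$ is primitive of square $2d$ and divisibility $\gamma$. *)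

From HB Require Import structures.
From mathcomp Require Import all_boot all_order all_algebra.
Set Implicit Arguments. Unset Strict Implicit. Unset Printing Implicit Defensive.
Import Order.TTheory GRing.Theory Num.Theory.
Local Open Scope ring_scope.

(* Lattice Lambda = U^3 + E8(-1)^2 + Z l, realised as Z^23 (column vectors)
   with basis: 0..5 = three copies of U (e=b0, f=b1 for the first copy),
   6..13 and 14..21 = two copies of E8(-1), 22 = l with (l,l) = -2(n-1). *)

(* Dynkin diagram of E8 (Bourbaki labels shifted to 0..7):
   0-2, 2-3, 3-4, 4-5, 5-6, 6-7, 1-3. *)
Definition E8adj (i j : nat) : bool :=
  [|| (i == 0%N) && (j == 2%N), (i == 2%N) && (j == 3%N),
      (i == 3%N) && (j == 4%N), (i == 4%N) && (j == 5%N),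
      (i == 5%N) && (j == 6%N), (i == 6%N) && (j == 7%N)
    | (i == 1%N) && (j == 3%N)].

(* Gram matrix of E8(-1) = minus the Cartan matrix of E8. *)
Definition E8m (i j : nat) : int :=
  if i == j then -2 else if E8adj i j || E8adj j i then 1 else 0.

Definition gram_entry (n i j : nat) : int :=
  if (i < 6)%N && (j < 6)%N then
    (if (i./2 == j./2) && (i != j) then 1 else 0)
  else if [&& (6 <= i)%N, (i < 14)%N, (6 <= j)%N & (j < 14)%N] then
    E8m (i - 6) (j - 6)
  else if [&& (14 <= i)%N, (i < 22)%N, (14 <= j)%N & (j < 22)%N] then
    E8m (i - 14) (j - 14)
  else if (i == 22%N) && (j == 22%N) then - (2 * n.-1)%:Z
  else 0.

Definition Gram (n : nat) : 'M[int]_23 := \matrix_(i, j) gram_entry n i j.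

Definition toQ {m k : nat} (M : 'M[int]_(m, k)) : 'M[rat]_(m, k) :=
  map_mx (fun z : int => z%:~R) M.

Definition form (n : nat) (x y : 'cV[int]_23) : int := (x^T *m Gram n *m y) 0 0.
Definition formQ (n : nat) (x y : 'cV[rat]_23) : rat := (x^T *m toQ (Gram n) *m y) 0 0.

Definition isint (q : rat) : Prop := exists k : int, q = k%:~R.

Definition bv (k : nat) : 'cV[int]_23 := \col_(i < 23) (if (i : nat) == k then 1 else 0).
Definition e_ : 'cV[int]_23 := bv 0.
Definition f_ : 'cV[int]_23 := bv 1.
Definition l_ : 'cV[int]_23 := bv 22.

Definition hvec (gamma : nat) (a t : int) : 'cV[int]_23 :=
  gamma%:Z *: (e_ + t *: f_) - a *: l_.

Definition in_dual (n : nat) (x : 'cV[rat]_23) : Prop :=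
  forall y : 'cV[int]_23, isint (formQ n x (toQ y)).

Definition isom_Lambda (n : nat) (g : 'M[int]_23) : Prop :=
  g \in unitmx /\ g^T *m Gram n *m g = Gram n.

Definition tildeO_Lambda (n : nat) (g : 'M[int]_23) : Prop :=
  isom_Lambda n g /\
  forall x : 'cV[rat]_23, in_dual n x ->
    exists z : 'cV[int]_23, toQ g *m x - x = toQ z.

Definition tildeO_Lambda_h (n : nat) (h : 'cV[int]_23) (g : 'M[int]_23) : Prop :=
  tildeO_Lambda n g /\ g *m h = h.

Definition in_span (P : 'cV[int]_23 -> Prop) (x : 'cV[rat]_23) : Prop :=
  exists m : nat, exists y : 'cV[int]_23, (0 < m)%N /\ P y /\ x *+ m = toQ y.

Definition in_sub_dual (n : nat) (P : 'cV[int]_23 -> Prop) (x : 'cV[rat]_23) : Prop :=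
  in_span P x /\ forall y, P y -> isint (formQ n x (toQ y)).

Definition isom_sub (n : nat) (P : 'cV[int]_23 -> Prop)
    (phi : 'cV[int]_23 -> 'cV[int]_23) : Prop :=
  (forall x, P x -> P (phi x)) /\
  (exists psi : 'cV[int]_23 -> 'cV[int]_23,
      (forall x, P x -> P (psi x)) /\
      (forall x, P x -> psi (phi x) = x) /\
      (forall x, P x -> phi (psi x) = x)) /\
  (forall x y, P x -> P y -> phi (x + y) = phi x + phi y) /\
  (forall x y, P x -> P y -> form n (phi x) (phi y) = form n x y).

(* tilde O(P): the Q-linear extension of phi acts trivially on P^vee / P.
   For x in P^vee with m x = y in P, phi_Q(x) = m^-1 phi(y). *)
Definition tildeO_sub (n : nat) (P : 'cV[int]_23 -> Prop)
    (phi : 'cV[int]_23 -> 'cV[int]_23) : Prop :=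
  isom_sub n P phi /\
  forall (x : 'cV[rat]_23) (m : nat) (y : 'cV[int]_23),
    in_sub_dual n P x -> (0 < m)%N -> P y -> x *+ m = toQ y ->
    exists z : 'cV[int]_23, P z /\ (m%:R)^-1 *: toQ (phi y) - x = toQ z.

Definition Lambda_perp (n : nat) (h : 'cV[int]_23) (v : 'cV[int]_23) : Prop :=
  form n v h = 0.

(* Let N = (h, h), which is nonzero.  Every w in Lambda satisfies
   N w = u + (w, h) h with u in Lambda_h, so an endomorphism of Lambda is
   determined by its values on h and on Lambda_h: this is injectivity.
   Conversely phi in O~(Lambda_h) extends to g w = (phi u + (w, h) h) / N.
   As u / N lies in the dual of Lambda_h and phi acts trivially on D(Lambda_h),
   phi u - u lies in N Lambda_h, so g is integral; the same congruence for
   x in the dual of Lambda shows that g acts trivially on D(Lambda), and the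
   extension of phi^-1 inverts g.  For the restriction, an element of the dual
   of Lambda_h becomes one of the dual of Lambda after subtracting a rational
   multiple of h, because (Lambda, h) = gamma Z; an isometry fixing h moves
   both by the same vector. *)

From Pilot Require Import Defs.
From HB Require Import structures.
From mathcomp Require Import all_boot all_order all_algebra.
From mathcomp Require Import ring.
Set Implicit Arguments. Unset Strict Implicit. Unset Printing Implicit Defensive.
Import Order.TTheory GRing.Theory Num.Theory.
Local Open Scope ring_scope.
(* Imported again so that [form] is [Defs.form], not mathcomp's sesquilinear
   [form]. *)
Import Defs.

Lemma toQ_mul m k p (A : 'M[int]_(m, k)) (B : 'M[int]_(k, p)) :
  toQ (A *m B) = toQ A *m toQ B.
Proof. exact: map_mxM. Qed.

Lemma toQ_sub m k (A B : 'M[int]_(m, k)) : toQ (A - B) = toQ A - toQ B.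
Proof. exact: map_mxB. Qed.

Lemma toQ_scale m k (c : int) (A : 'M[int]_(m, k)) : toQ (c *: A) = c%:~R *: toQ A.
Proof. exact: map_mxZ. Qed.

Lemma toQ_tr m k (A : 'M[int]_(m, k)) : toQ A^T = (toQ A)^T.
Proof. by rewrite /toQ map_trmx. Qed.

Lemma toQ_inj m k : injective (@toQ m k).
Proof.
move=> A B /matrixP eqAB; apply/matrixP => i j; apply: (@intr_inj rat).
by have := eqAB i j; rewrite !mxE.
Qed.

Lemma denom_exists m k (x : 'M[rat]_(m, k)) : exists d X, (0 < d)%N /\ x *+ d = toQ X.
Proof.
pose D : int := \prod_(i < m) \prod_(j < k) denq (x i j).
have D_gt0 : 0 < D by do 2!apply: prodr_gt0 => ? _; apply: denq_gt0.
exists `|D|%N, (\matrix_(i, j) numq (x i j * D%:~R)).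
split; first by rewrite absz_gt0 gt_eqF.
apply/matrixP => i j; rewrite mulmxnE !mxE -mulr_natr natr_absz gtr0_norm //.
suff [c ->] : exists c : int, x i j * D%:~R = c%:~R by rewrite numq_int.
exists (numq (x i j) * (\prod_(j' | j' != j) denq (x i j')) *
        \prod_(i' | i' != i) \prod_(j' < k) denq (x i' j')).
by rewrite /D (bigD1 i) //= (bigD1 j) //= !intrM !mulrA -numqE.
Qed.

Lemma scalemx_inj m k (c : int) : c != 0 -> injective (fun A : 'M[int]_(m, k) => c *: A).
Proof.
move=> c0 A B /matrixP eqAB; apply/matrixP => i j; apply: (mulfI c0).
by have := eqAB i j; rewrite !mxE.
Qed.

Lemma mx_eq_on_cV (R : pzSemiRingType) m k (A B : 'M[R]_(m, k)) :
  (forall v : 'cV_k, A *m v = B *m v) -> A = B.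
Proof.
by move=> eqAB; apply/matrixP => i j; move/matrixP: (eqAB (delta_mx j 0)) => /(_ i 0);
  rewrite -!colE !mxE.
Qed.

Lemma cV_sum_delta (R : pzSemiRingType) k (v : 'cV[R]_k) :
  v = \sum_(j < k) v j 0 *: delta_mx j 0.
Proof. by rewrite {1}(matrix_sum_delta v); apply: eq_bigr => j _; rewrite big_ord1. Qed.

Lemma mul_matrix_cols (R : comPzSemiRingType) m k (c : 'I_k -> 'cV[R]_m) (v : 'cV[R]_k) :
  (\matrix_(i, j) c j i 0) *m v = \sum_j v j 0 *: c j.
Proof.
apply/matrixP => i l; rewrite !mxE summxE; apply: eq_bigr => j _.
by rewrite !mxE (ord1 l) mulrC.
Qed.

Lemma mx_dvdz_scale m k (c : int) (A : 'M[int]_(m, k)) :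
  (forall i j, (c %| A i j)%Z) -> exists B, A = c *: B.
Proof.
move=> dvdA; exists (\matrix_(i, j) (A i j %/ c)%Z).
by apply/matrixP => i j; rewrite !mxE mulrC divzK.
Qed.

Lemma mx_form_is_bilinear (R : comNzRingType) k (M : 'M[R]_k) :
  bilinear_for (GRing.Scale.Law.clone _ _ *%R _) (GRing.Scale.Law.clone _ _ *%R _)
    (fun x y : 'cV[R]_k => (x^T *m M *m y) 0 0).
Proof.
split=> [u|u] a x y /=.
- by rewrite linearP /= !mulmxDl -!scalemxAl !mxE.
- by rewrite !mulmxDr -!scalemxAr !mxE.
Qed.

HB.instance Definition _ n := bilinear_isBilinear.Build int
  'cV[int]_23 'cV[int]_23 int _ _ (form n) (mx_form_is_bilinear (Gram n)).
HB.instance Definition _ n := bilinear_isBilinear.Build rat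
  'cV[rat]_23 'cV[rat]_23 rat _ _ (formQ n) (mx_form_is_bilinear (toQ (Gram n))).

Lemma mx_form_inj (R : pzSemiRingType) k (M1 M2 : 'M[R]_k) :
  (forall x y : 'cV_k, (x^T *m M1 *m y) 0 0 = (x^T *m M2 *m y) 0 0) -> M1 = M2.
Proof.
move=> eqM; apply/matrixP => i j.
by have := eqM (delta_mx i 0) (delta_mx j 0); rewrite trmx_delta -!rowE -!colE !mxE.
Qed.

Lemma gram_entry_sym n i j : gram_entry n i j = gram_entry n j i.
Proof.
have andb4C (a b c d : bool) : [&& a, b, c & d] = [&& c, d, a & b] by case: a b c d => [] [] [] [].
by rewrite /gram_entry /E8m (andbC (j < 6)%N) (eq_sym j./2) (eq_sym j i) (andb4C (6 <= j)%N)
  (andb4C (14 <= j)%N) (andbC (j == 22%N)) (eq_sym (j - 6)%N) (eq_sym (j - 14)%N)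
  (orbC (E8adj (j - 6) _)) (orbC (E8adj (j - 14) _)).
Qed.

Lemma Gram_sym n : (Gram n)^T = Gram n.
Proof. by apply/matrixP => i j; rewrite !mxE gram_entry_sym. Qed.

Lemma form_sym n x y : form n x y = form n y x.
Proof.
have trE (A : 'M[int]_1) : A 0 0 = A^T 0 0 by rewrite mxE.
by rewrite /form trE !trmx_mul trmxK Gram_sym mulmxA.
Qed.

Lemma formQ_toQ n x y : formQ n (toQ x) (toQ y) = (form n x y)%:~R.
Proof. by rewrite /formQ /form -toQ_tr -!toQ_mul mxE. Qed.

Lemma isom_formP n (g : 'M[int]_23) :
  g^T *m Gram n *m g = Gram n <-> forall x y, form n (g *m x) (g *m y) = form n x y.
Proof.
have formE x y : form n (g *m x) (g *m y) = (x^T *m (g^T *m Gram n *m g) *m y) 0 0.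
  by rewrite /form trmx_mul !mulmxA.
split=> [gG x y | gform]; first by rewrite formE gG.
by apply: mx_form_inj => x y; rewrite -formE gform.
Qed.

(* [y / k] runs over the dual of the sublattice [P]: [phi] acts trivially on
   the discriminant group [P^vee / P] iff it moves each such vector by an
   element of [P]. *)
Definition discr_trivial n (P : 'cV[int]_23 -> Prop) (phi : 'cV[int]_23 -> 'cV[int]_23) :=
  forall (y : 'cV[int]_23) (k : int), P y -> k != 0 ->
    (forall v, P v -> (k %| form n y v)%Z) -> exists2 z, P z & phi y - y = k *: z.

Lemma isint_formQ n (k : int) x y w : k != 0 -> toQ y = k%:~R *: x ->
  (k %| form n y w)%Z <-> isint (formQ n x (toQ w)).
Proof.
move=> k0 yE; have k0' : k%:~R != 0 :> rat by rewrite intr_eq0.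
have formE : (form n y w)%:~R = k%:~R * formQ n x (toQ w).
  by rewrite -formQ_toQ yE linearZl_LR.
split=> [/dvdzP[q qE] | [q qE]].
  by exists q; apply: (mulfI k0'); rewrite -formE qE intrM mulrC.
by apply/dvdzP; exists q; apply: (@intr_inj rat); rewrite formE qE intrM mulrC.
Qed.

Lemma tildeO_LambdaP n g :
  tildeO_Lambda n g <-> isom_Lambda n g /\ discr_trivial n (fun=> True) (mulmx g).
Proof.
split=> -[gI gD]; split=> //.
  move=> y k _ k0 ky; have k0' : k%:~R != 0 :> rat by rewrite intr_eq0.
  have yE : toQ y = k%:~R *: (k%:~R^-1 *: toQ y) by rewrite scalerA mulfV ?scale1r.
  have [|z gz] := gD (k%:~R^-1 *: toQ y).
    by move=> w; apply/(isint_formQ _ _ k0 yE); apply: ky.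
  exists z => //; apply: toQ_inj.
  by rewrite toQ_sub toQ_mul toQ_scale [in LHS]yE -gz scalerBr scalemxAr.
move=> x xD; have [m [y [m0 xm]]] := denom_exists x.
have m0' : m%:Z != 0 by rewrite -lt0n.
have m0Q : m%:Z%:~R != 0 :> rat by rewrite intr_eq0.
have yE : toQ y = m%:Z%:~R *: x by rewrite -xm scaler_nat.
have [|z _ gz] := gD y m%:Z I m0'.
  by move=> w _; apply/(isint_formQ _ _ m0' yE).
exists z; apply: (scalerI m0Q).
by rewrite -toQ_scale -gz toQ_sub toQ_mul yE scalerBr scalemxAr.
Qed.

Lemma tildeO_subP n (P : 'cV[int]_23 -> Prop) phi : (forall v, P v -> P (- v)) ->
  tildeO_sub n P phi <-> isom_sub n P phi /\ discr_trivial n P phi.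
Proof.
move=> PN; split=> -[phiI phiD]; split=> //.
  move=> y k Py k0 ky; pose m := `|k|%N.
  have m0 : (0 < m)%N by rewrite absz_gt0.
  have m0' : m%:Z%:~R != 0 :> rat by rewrite intr_eq0 -lt0n.
  pose x := m%:Z%:~R^-1 *: toQ y.
  have yE : toQ y = m%:Z%:~R *: x by rewrite scalerA mulfV ?scale1r.
  have xm : x *+ m = toQ y by rewrite yE scaler_nat.
  have xD : in_sub_dual n P x.
    split; first by exists m, y.
    by move=> v Pv; apply/(isint_formQ _ _ _ yE); [rewrite -lt0n | exact: ky].
  have [z [Pz phiz]] := phiD x m y xD m0 Py xm.
  have phiyE : phi y - y = m%:Z *: z.
    apply: toQ_inj; rewrite toQ_sub toQ_scale -phiz scalerBr scalerA mulfV // scale1r.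
    by rewrite -yE.
  case: (ltrgt0P k) k0 => // [k_gt0 | k_lt0] _.
    by exists z; rewrite // phiyE gtz0_abs.
  by exists (- z); [exact: PN | rewrite phiyE ltz0_abs // scaleNr scalerN].
move=> x m y [_ xD] m0 Py xm.
have m0' : m%:Z != 0 by rewrite -lt0n.
have m0Q : m%:Z%:~R != 0 :> rat by rewrite intr_eq0.
have yE : toQ y = m%:Z%:~R *: x by rewrite -xm scaler_nat.
have [|z Pz phiz] := phiD y m%:Z Py m0'.
  by move=> v Pv; apply/(isint_formQ _ _ m0' yE); apply: xD.
exists z; split=> //; apply: (scalerI m0Q).
by rewrite -toQ_scale -phiz toQ_sub yE scalerBr scalerA mulfV ?scale1r.
Qed.

Section Perp.
Variables (n : nat) (h : 'cV[int]_23).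
Local Notation P := (Lambda_perp n h).
Local Notation N := (form n h h).

Lemma perp0 : P 0. Proof. exact: linear0l. Qed.

Lemma perpD x y : P x -> P y -> P (x + y).
Proof. by rewrite /Lambda_perp linearDl /= => -> ->; rewrite addr0. Qed.

Lemma perpZ c x : P x -> P (c *: x).
Proof. by rewrite /Lambda_perp linearZl_LR /= => ->; rewrite mulr0. Qed.

Lemma perpN x : P x -> P (- x).
Proof. by rewrite -scaleN1r; apply: perpZ. Qed.

Lemma perpB x y : P x -> P y -> P (x - y).
Proof. by move=> Px /perpN; apply: perpD. Qed.

Lemma perp_sum I r (F : I -> 'cV[int]_23) : (forall i, P (F i)) -> P (\sum_(i <- r) F i).
Proof. by move=> PF; elim/big_rec: _ => [|i v _]; [exact: perp0 | apply: perpD]. Qed.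

Lemma mul_hh_mx w : h *m (h^T *m Gram n) *m w = form n w h *: h.
Proof. by rewrite -mulmxA [_ *m w]mx11_scalar mul_mx_scalar form_sym. Qed.

Definition perp_mx : 'M[int]_23 := N%:M - h *m (h^T *m Gram n).

Lemma perp_mxE w : perp_mx *m w = N *: w - form n w h *: h.
Proof. by rewrite mulmxBl mul_scalar_mx mul_hh_mx. Qed.

Lemma perp_mxP w : P (perp_mx *m w).
Proof. by rewrite /Lambda_perp perp_mxE linearBl !linearZl_LR /= mulrC subrr. Qed.

Lemma perp_mx_perp v : P v -> perp_mx *m v = N *: v.
Proof. by rewrite perp_mxE => ->; rewrite scale0r subr0. Qed.

Lemma perp_mx_h : perp_mx *m h = 0.
Proof. by rewrite perp_mxE subrr. Qed.

Lemma form_perp_mx w v : P v -> form n (perp_mx *m w) v = N * form n w v.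
Proof. by rewrite perp_mxE linearBl !linearZl_LR /= (form_sym n h) => ->; rewrite mulr0 subr0. Qed.

Lemma isom_sub_restrict g : isom_Lambda n g -> g *m h = h -> isom_sub n P (mulmx g).
Proof.
move=> [gU /isom_formP gform] gh.
split; first by move=> v Pv; rewrite /Lambda_perp -gh gform.
split; last by split=> x y _ _; [rewrite mulmxDr | exact: gform].
exists (mulmx (invmx g)); split; last by split=> v _; rewrite ?mulKmx ?mulKVmx.
by move=> v Pv; rewrite /Lambda_perp -(gform _ h) mulKVmx // gh.
Qed.

Section Restriction.
Variables (gam : int) (w0 : 'cV[int]_23).
Hypotheses (gam_neq0 : gam != 0) (w0h : form n w0 h = gam).
Hypothesis gam_dvd : forall w, (gam %| form n w h)%Z.

(* For [y / k] in the dual of [Lambda_h], the vector [(gam y - (y, w0) h) / (k gam)]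
   lies in the dual of [Lambda]; [g] fixes [h], so it moves both vectors alike. *)
Lemma discr_trivial_restrict g : g *m h = h ->
  (forall x y, form n (g *m x) (g *m y) = form n x y) ->
  discr_trivial n (fun=> True) (mulmx g) -> discr_trivial n P (mulmx g).
Proof.
move=> gh gform gD y k Py k0 ky.
pose Y := gam *: y - form n y w0 *: h.
have [|z _ gYE] := gD Y (k * gam) I (mulf_neq0 k0 gam_neq0).
  move=> w _; have /dvdzP[q wq] := gam_dvd w.
  have Pw' : P (w - q *: w0) by rewrite /Lambda_perp linearBl linearZl_LR /= w0h wq subrr.
  have /dvdzP[r rE] := ky _ Pw'; apply/dvdzP; exists r.
  rewrite linearBl !linearZl_LR /= (form_sym n h) wq.
  have -> : form n y w = r * k + q * form n y w0 by rewrite -rE linearBr linearZr_LR subrK.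
  ring.
have gyE : g *m y - y = k *: z.
  apply: (scalemx_inj gam_neq0); rewrite /= [gam *: (k *: z)]scalerA [gam * k]mulrC -gYE.
  by rewrite /Y mulmxBr -!scalemxAr gh scalerBr opprB addrA subrK.
exists z => //; apply/eqP; rewrite -(mulrI_eq0 _ (mulfI k0)).
by rewrite -linearZl_LR -gyE linearBl /= -{1}gh gform Py subrr.
Qed.

Lemma tildeO_restrict g : tildeO_Lambda_h n h g -> tildeO_sub n P (mulmx g).
Proof.
move=> [/tildeO_LambdaP[gI gD] gh]; apply/(tildeO_subP _ _ perpN).
split; first exact: isom_sub_restrict.
by apply: discr_trivial_restrict => //; apply/isom_formP; case: gI.
Qed.

End Restriction.

Section Additive.
Variable phi : 'cV[int]_23 -> 'cV[int]_23.
Hypothesis phiD : forall x y, P x -> P y -> phi (x + y) = phi x + phi y.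

Lemma phi0 : phi 0 = 0.
Proof. by apply: (@addrI _ (phi 0)); rewrite -phiD ?addr0 //; apply: perp0. Qed.

Lemma phiB x y : P x -> P y -> phi (x - y) = phi x - phi y.
Proof. by move=> Px Py; rewrite -[in phi x](subrK y x) (phiD (perpB Px Py) Py) addrK. Qed.

Lemma phiZ c x : P x -> phi (c *: x) = c *: phi x.
Proof.
move=> Px; elim/int_rect: c => [|k IH|k IH]; first by rewrite !scale0r phi0.
  by rewrite intS !scalerDl !scale1r phiD ?IH //; apply: perpZ.
by rewrite intS opprD addrC !scalerDl !scaleN1r phiB ?IH //; apply: perpZ.
Qed.

Lemma phi_sum I r (F : I -> 'cV[int]_23) : (forall i, P (F i)) ->
  phi (\sum_(i <- r) F i) = \sum_(i <- r) phi (F i).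
Proof.
move=> PF; elim: r => [|i r IH]; first by rewrite !big_nil phi0.
by rewrite !big_cons phiD ?IH //; apply: perp_sum.
Qed.

Lemma ext_mx_exists : exists A, forall w, A *m w = phi (perp_mx *m w) + form n w h *: h.
Proof.
exists (\matrix_(i, j) phi (perp_mx *m delta_mx j 0) i 0 + h *m (h^T *m Gram n)) => w.
rewrite mulmxDl mul_matrix_cols mul_hh_mx [X in phi (perp_mx *m X)]cV_sum_delta.
rewrite mulmx_sumr phi_sum => [|j]; last by rewrite -scalemxAr; apply/perpZ/perp_mxP.
by congr (_ + _); apply/eq_bigr => j _; rewrite -scalemxAr phiZ //; apply: perp_mxP.
Qed.

End Additive.

Hypothesis N_neq0 : N != 0.

Lemma mx_eq_on_h_perp (g1 g2 : 'M[int]_23) :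
  g1 *m h = g2 *m h -> (forall v, P v -> g1 *m v = g2 *m v) -> g1 = g2.
Proof.
move=> eq_h eq_perp; apply: mx_eq_on_cV => w; apply: (scalemx_inj N_neq0).
have wE : N *: w = perp_mx *m w + form n w h *: h by rewrite perp_mxE subrK.
by rewrite /= !scalemxAr wE !mulmxDr -!scalemxAr eq_h eq_perp //; apply: perp_mxP.
Qed.

Section Extension.
Variable phi : 'cV[int]_23 -> 'cV[int]_23.
Hypothesis phiD : forall x y, P x -> P y -> phi (x + y) = phi x + phi y.
Hypothesis phiP : forall v, P v -> P (phi v).
Hypothesis phi_form : forall x y, P x -> P y -> form n (phi x) (phi y) = form n x y.
Hypothesis phi_discr : discr_trivial n P phi.

Lemma phi_perp_mx_congr w (k : int) : k != 0 -> (forall v, (k %| form n w v)%Z) ->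
  exists z, phi (perp_mx *m w) - perp_mx *m w = (N * k) *: z.
Proof.
move=> k0 kw; have [|z _ ->] := phi_discr (perp_mxP w) (mulf_neq0 N_neq0 k0).
  by move=> v Pv; rewrite form_perp_mx // dvdz_mul ?dvdzz.
by exists z.
Qed.

Lemma ext_exists : exists g, forall w, N *: (g *m w) = phi (perp_mx *m w) + form n w h *: h.
Proof.
have [A AE] := ext_mx_exists phiD.
have [|g AgE] := @mx_dvdz_scale _ _ N A; last by exists g => w; rewrite scalemxAl -AgE AE.
move=> i j; have [z zE] := @phi_perp_mx_congr (delta_mx j 0) 1 (oner_neq0 _) (fun _ => dvd1z _).
have colA : A *m delta_mx j 0 = N *: (delta_mx j 0 + z).
  rewrite AE -[phi _](subrK (perp_mx *m delta_mx j 0)) zE perp_mxE mulr1.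
  by rewrite addrA subrK scalerDr addrC.
apply/dvdzP; exists ((delta_mx j 0 + z) i 0).
by move/matrixP: colA => /(_ i 0); rewrite -colE !mxE mulrC.
Qed.

Section ExtensionMatrix.
Variable g : 'M[int]_23.
Hypothesis gE : forall w, N *: (g *m w) = phi (perp_mx *m w) + form n w h *: h.

Lemma ext_perp v : P v -> g *m v = phi v.
Proof.
move=> Pv; apply: (scalemx_inj N_neq0).
by rewrite /= gE [form n v h]Pv scale0r addr0 perp_mx_perp // phiZ.
Qed.

Lemma ext_h : g *m h = h.
Proof. by apply: (scalemx_inj N_neq0); rewrite /= gE perp_mx_h phi0 // add0r. Qed.

Lemma ext_form x y : form n (g *m x) (g *m y) = form n x y.
Proof.
apply: (mulfI (mulf_neq0 N_neq0 N_neq0)).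
have phi_perp_h w : form n (phi (perp_mx *m w)) h = 0 by apply/phiP/perp_mxP.
have -> : N * N * form n (g *m x) (g *m y) = form n (N *: (g *m x)) (N *: (g *m y)).
  by rewrite linearZl_LR linearZr_LR /= mulrA.
rewrite !gE linearDl !linearDr !linearZl_LR !linearZr_LR /=.
rewrite (form_sym n h (phi _)) !phi_perp_h (phi_form (perp_mxP x) (perp_mxP y)).
rewrite (form_perp_mx _ (perp_mxP y)) perp_mxE linearBr !linearZr_LR /=.
ring.
Qed.

Lemma ext_discr : discr_trivial n (fun=> True) (mulmx g).
Proof.
move=> y k _ k0 ky; have [z zE] := phi_perp_mx_congr k0 (fun v => ky v I).
exists z => //; apply: (scalemx_inj N_neq0).
by rewrite /= scalerBr gE scalerA -zE perp_mxE opprB addrA.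
Qed.

End ExtensionMatrix.
End Extension.

Lemma tildeO_extension phi : tildeO_sub n P phi -> exists g : 'M[int]_23,
  [/\ g *m h = h, g^T *m Gram n *m g = Gram n, discr_trivial n (fun=> True) (mulmx g)
    & forall v, P v -> g *m v = phi v].
Proof.
case/(tildeO_subP _ _ perpN) => -[phiP [_ [phiD phi_form]]] phi_discr.
have [g gE] := ext_exists phiD phi_discr.
exists g; split; first exact: ext_h gE.
- by apply/isom_formP; apply: ext_form gE.
- exact: ext_discr gE.
- exact: ext_perp gE.
Qed.

Lemma tildeO_sub_inv phi : tildeO_sub n P phi ->
  exists2 psi, tildeO_sub n P psi & forall v, P v -> psi (phi v) = v.
Proof.
case/(tildeO_subP _ _ perpN) => -[phiP [[psi [psiP [psiK phiK]]] [phiD phi_form]]] phi_discr.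
exists psi => //; apply/(tildeO_subP _ _ perpN); split.
  split=> //; split; first by exists phi.
  split=> x y Px Py; last by rewrite -(phi_form _ _ (psiP _ Px) (psiP _ Py)) !phiK.
  have Pxy := perpD (psiP _ Px) (psiP _ Py).
  by rewrite -{1}(phiK x Px) -{1}(phiK y Py) -(phiD _ _ (psiP _ Px) (psiP _ Py)) psiK.
move=> y k Py k0 ky.
have [|z Pz phizE] := phi_discr _ _ (psiP _ Py) k0.
  by move=> v Pv; rewrite -(phi_form _ _ (psiP _ Py) Pv) phiK //; apply/ky/phiP.
by exists (- z); [exact: perpN | rewrite scalerN -phizE phiK // opprB].
Qed.

Lemma tildeO_surj phi : tildeO_sub n P phi ->
  exists g, tildeO_Lambda_h n h g /\ forall v, P v -> phi v = g *m v.
Proof.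
move=> phiT; have [g [gh gG gD gphi]] := tildeO_extension phiT.
have [psi psiT psiK] := tildeO_sub_inv phiT.
have [g' [g'h _ _ g'psi]] := tildeO_extension psiT.
have g'gK : g' *m g = 1%:M.
  apply: mx_eq_on_h_perp => [|v Pv]; first by rewrite -mulmxA gh g'h mul1mx.
  have Pphiv := phiT.1.1 v Pv.
  by rewrite -mulmxA gphi // g'psi // psiK // mul1mx.
exists g; split=> [|v Pv]; last by rewrite gphi.
split=> //; apply/tildeO_LambdaP; split=> //; split=> //.
exact: (mulmx1_unit g'gK).2.
Qed.

End Perp.

Lemma bvE k : (k < 23)%N -> bv k = delta_mx (inord k) 0.
Proof.
move=> k_lt; apply/matrixP => i j; rewrite !mxE (ord1 j) eqxx andbT.
by rewrite -val_eqE /= inordK //; case: (_ == _).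
Qed.

Lemma form_bv n i j : (i < 23)%N -> (j < 23)%N -> form n (bv i) (bv j) = gram_entry n i j.
Proof.
move=> i_lt j_lt; rewrite /form !bvE // trmx_delta -rowE -colE !mxE.
by rewrite !inordK.
Qed.

Lemma Gram_l n : Gram n *m l_ = - (2 * n.-1)%:Z *: l_.
Proof.
rewrite /l_ bvE // -colE; apply/matrixP => i j; rewrite !mxE (ord1 j) inordK //=.
by rewrite /gram_entry /= !andbF /= andbT -val_eqE /= inordK //; case: eqP; rewrite ?mulr1 ?mulr0.
Qed.

Lemma form_l_dvd n w : ((2 * n.-1)%:Z %| form n w l_)%Z.
Proof. by rewrite /form -mulmxA Gram_l -scalemxAr mxE mulNr rpredN dvdz_mulr. Qed.

Lemma dvdz_form_hvec n gamma a t w : (gamma %| 2 * n.-1)%N ->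
  (gamma%:Z %| form n w (hvec gamma a t))%Z.
Proof.
move=> gamma_dvd; rewrite linearBr !linearZr_LR /= rpredB //.
  exact/dvdz_mulr/dvdzz.
exact/dvdz_mull/(dvdz_trans _ (form_l_dvd n w)).
Qed.

Lemma form_f_hvec n gamma a t : form n f_ (hvec gamma a t) = gamma%:Z.
Proof.
rewrite linearBr !linearZr_LR linearDr linearZr_LR /= /e_ /f_ /l_ !form_bv //.
by rewrite /gram_entry /= mulr0 addr0 mulr1 mulr0 subr0.
Qed.

Lemma form_hvec n gamma a t :
  form n (hvec gamma a t) (hvec gamma a t) = 2 * (gamma%:Z ^+ 2 * t - n.-1%:Z * a ^+ 2).
Proof.
rewrite !(linearBl, linearBr, linearDl, linearDr, linearZl_LR, linearZr_LR) /=.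
rewrite /e_ /f_ /l_ !form_bv // /gram_entry /= PoszM.
ring.
Qed.

Theorem proposition3p6 (n gamma : nat) (a t : int) :
  (2 <= n)%N -> (0 < gamma)%N -> (gamma %| 2 * n.-1)%N ->
  coprimez a gamma%:Z ->
  0 < gamma%:Z ^+ 2 * t - n.-1%:Z * a ^+ 2 ->
  let h := hvec gamma a t in
  (* restriction maps tilde O(Lambda,h) into tilde O(Lambda_h) *)
  (forall g : 'M[int]_23, tildeO_Lambda_h n h g ->
     tildeO_sub n (Lambda_perp n h) (fun v => g *m v)) /\
  (* it is injective *)
  (forall g1 g2 : 'M[int]_23, tildeO_Lambda_h n h g1 -> tildeO_Lambda_h n h g2 ->
     (forall v, Lambda_perp n h v -> g1 *m v = g2 *m v) -> g1 = g2) /\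
  (* and surjective *)
  (forall phi : 'cV[int]_23 -> 'cV[int]_23, tildeO_sub n (Lambda_perp n h) phi ->
     exists g : 'M[int]_23, tildeO_Lambda_h n h g /\
       forall v, Lambda_perp n h v -> phi v = g *m v).
Proof.
move=> _ gamma_gt0 gamma_dvd _ d_gt0 h.
have gamma_neq0 : gamma%:Z != 0 by rewrite -lt0n.
have N_neq0 : form n h h != 0 by rewrite form_hvec mulf_neq0 // gt_eqF.
split; first by move=> g; apply: (tildeO_restrict gamma_neq0 (form_f_hvec n gamma a t)) => w;
  apply: dvdz_form_hvec.
split; last exact: tildeO_surj.
by move=> g1 g2 [_ g1h] [_ g2h]; apply: mx_eq_on_h_perp => //; rewrite g1h g2h.
Qed.
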